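(* For every formula $\varphi$ of $\mathcal L^{\bigcirc}_\square$: $\varphi$ is derivable in $\mathbf{K4C}$ if and only if $\varphi$ is valid on every finite dynamic $\mathbf{K4}$ frame.
   Context: Fix a non-empty set $\mathsf{PV}$ of propositional variables. The language $\mathcal L^{\bigcirc}_\square$ is given by $\varphi::= p\mid \varphi\wedge\varphi\mid\neg\varphi\mid\square\varphi\mid\bigcirc\varphi$ with $p\in\mathsf{PV}$; $\lozenge:=\neg\square\neg$. Axioms and rules: Taut (all propositional tautologies); K: $\square(\varphi\to\psi)\to(\square\varphi\to\square\psi)$; 4: $\square\varphi\to\square\square\varphi$; ${\rm Next}_\neg$: $\neg\bigcirc\varphi\leftrightarrow\bigcirc\neg\varphi$; ${\rm Next}_\wedge$: $\bigcirc(\varphi\wedge\psi)\leftrightarrow\bigcirc\varphi\wedge\bigcirc\psi$; C: $\bigcirc\varphi\wedge\bigcirc\square\varphi\to\square\bigcirc\varphi$; rules modus ponens, ${\rm Nec}_\square$, ${\rm Nec}_\bigcirc$. $\mathbf{K4C}$ is axiomatised by Taut, K, 4, ${\rm Next}_\neg$, ${\rm Next}_\wedge$, C, closed under MP, ${\rm Nec}_\square$, ${\rm Nec}_\bigcirc$. A dynamic Kripke frame is $\langle W,\sqsubset,f\rangle$ with $W$ non-empty, $\sqsubset$ a binary relation on $W$, and $f\colon W\to W$ weakly monotone: $w\sqsubset v$ implies $f(w)=f(v)$ or $f(w)\sqsubset f(v)$. It is a dynamic $\mathbf{K4}$ frame if $\sqsubset$ is transitive. Truth under a valuation $\nu\colon\mathsf{PV}\to\wp(W)$: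 $w\models p$ iff $w\in\nu(p)$, Boolean clauses as usual, $w\models\square\varphi$ iff $v\models\varphi$ for all $v$ with $w\sqsubset v$, $w\models\bigcirc\varphi$ iff $f(w)\models\varphi$. Valid on a frame means true at all points under all valuations. *)

From mathcomp Require Import all_boot.
Set Implicit Arguments.
Unset Strict Implicit.
Unset Printing Implicit Defensive.

Inductive form (PV : Type) : Type :=
| Var : PV -> form PV
| And : form PV -> form PV -> form PV
| Neg : form PV -> form PV
| Box : form PV -> form PV
| Next : form PV -> form PV.

Arguments Var {PV}. Arguments And {PV}. Arguments Neg {PV}.
Arguments Box {PV}. Arguments Next {PV}.

Section Syntax.
Variable PV : Type.
Definition Or (a b : form PV) := Neg (And (Neg a) (Neg b)).
Definition Imp (a b : form PV) := Neg (And a (Neg b)).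
Definition Iff (a b : form PV) := And (Imp a b) (Imp b a).
Definition Dia (a : form PV) := Neg (Box (Neg a)).

Fixpoint peval (h : form PV -> bool) (phi : form PV) : bool :=
  match phi with
  | Var _ => h phi
  | And a b => peval h a && peval h b
  | Neg a => ~~ peval h a
  | Box _ => h phi
  | Next _ => h phi
  end.

(* Propositional tautologies (substitution instances of classical tautologies). *)
Definition tautology (phi : form PV) : Prop := forall h, peval h phi = true.

Inductive K4C : form PV -> Prop :=
| ax_taut phi : tautology phi -> K4C phi
| ax_K phi psi : K4C (Imp (Box (Imp phi psi)) (Imp (Box phi) (Box psi)))
| ax_4 phi : K4C (Imp (Box phi) (Box (Box phi)))
| ax_next_neg phi : K4C (Iff (Neg (Next phi)) (Next (Neg phi)))
| ax_next_and phi psi : K4C (Iff (Next (And phi psi)) (And (Next phi) (Next psi)))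
| ax_C phi : K4C (Imp (And (Next phi) (Next (Box phi))) (Box (Next phi)))
| rule_mp phi psi : K4C phi -> K4C (Imp phi psi) -> K4C psi
| rule_nec_box phi : K4C phi -> K4C (Box phi)
| rule_nec_next phi : K4C phi -> K4C (Next phi).
End Syntax.

Record fin_dyn_frame := FinDynFrame {
  carrier :> finType;
  rel : carrier -> carrier -> Prop;
  point : carrier; (* W is non-empty *)
  dyn : carrier -> carrier;
  dyn_weakly_monotone : forall w v, rel w v -> dyn w = dyn v \/ rel (dyn w) (dyn v)
}.

Definition is_K4 (F : fin_dyn_frame) : Prop :=
  forall u v w : F, rel u v -> rel v w -> rel u w.

Section Semantics.
Variables (PV : Type) (F : fin_dyn_frame).

Fixpoint sat (nu : PV -> F -> Prop) (w : F) (phi : form PV) : Prop :=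
  match phi with
  | Var p => nu p w
  | And a b => sat nu w a /\ sat nu w b
  | Neg a => ~ sat nu w a
  | Box a => forall v, rel w v -> sat nu v a
  | Next a => sat nu (dyn w) a
  end.

Definition valid_on (phi : form PV) : Prop :=
  forall (nu : PV -> F -> Prop) (w : F), sat nu w phi.
End Semantics.

From mathcomp Require Import all_boot.
From HB Require Import structures.
From mathcomp Require Import boolp.
Set Implicit Arguments. Unset Strict Implicit. Unset Printing Implicit Defensive.

(* Soundness is a routine induction on derivations: axiom 4 needs
   transitivity and axiom C the weak monotonicity of the dynamic map.

   Completeness is proved by a finite canonical model built from the closure
   [L] of a non-theorem phi (its subformulas, together with the ○-prefixed
   copies allowed by the ○'s above them).  A point is a pair (D, V) of subsets
   of L: a window D of formulas the point decides and the set V of those it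
   makes true, whose characteristic formula (the conjunction of the decided
   literals) is consistent.  The dynamic map sends (D, V) to the ○-shifts
   ({a | Next a ∈ D}, {a | Next a ∈ V}); the relation is the least one relating
   □-successors on a common window whose images under the dynamic map are
   equal or again related, so it is transitive and weakly monotone by
   construction.  The truth lemma reduces to finding, for a false [Box a] at
   x, a successor refuting a: axiom C along the trajectory of x yields a
   formula [reach n x] describing x and its successors, and a Lindenbaum
   argument on a consistent extension of it produces the witness; windows
   become empty after finitely many shifts, which bounds n. *)

(* Formulas over an arbitrary type of variables get the classical decidable
   equality and choice structure; finite sets of formulas need them. *)
HB.instance Definition _ (PV : Type) := gen_eqMixin (form PV).
HB.instance Definition _ (PV : Type) := gen_choiceMixin (form PV).

Ltac prove_tautology :=
  let h := fresh "h" in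
  intro h; rewrite /Iff /Imp /Or /Dia; simpl;
  repeat match goal with
  | |- context [peval h ?x] => destruct (peval h x)
  | |- context [h ?x] => destruct (h x)
  end; simpl; done.

Section Derivations.
Variables (PV : Type) (p0 : PV).
Local Notation form := (form PV).
Implicit Types (a b c d t : form) (l : seq form).

Lemma taut_mp1 a b : tautology (Imp a b) -> K4C a -> K4C b.
Proof. by move=> tab Ha; apply: rule_mp Ha (ax_taut tab). Qed.

Lemma taut_mp2 a b c : tautology (Imp a (Imp b c)) -> K4C a -> K4C b -> K4C c.
Proof. by move=> tabc Ha Hb; apply: rule_mp Hb _; apply: taut_mp1 tabc Ha. Qed.

Lemma taut_mp3 a b c d :
  tautology (Imp a (Imp b (Imp c d))) -> K4C a -> K4C b -> K4C c -> K4C d.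
Proof.
move=> tabcd Ha Hb Hc; apply: rule_mp Hc _; apply: rule_mp Hb _.
exact: taut_mp1 tabcd Ha.
Qed.

Lemma imp_trans a b c : K4C (Imp a b) -> K4C (Imp b c) -> K4C (Imp a c).
Proof. by apply: taut_mp2; prove_tautology. Qed.

Definition Top : form := Imp (Var p0) (Var p0).
Definition bigAnd l : form := foldr And Top l.

Lemma Top_der : K4C Top.
Proof. by apply: ax_taut; prove_tautology. Qed.

Lemma peval_bigAnd h l : peval h (bigAnd l) = all (peval h) l.
Proof. by elim: l => //= [|y l ->]; case: (h (Var p0)). Qed.

Lemma bigAnd_elim l a : a \in l -> K4C (Imp (bigAnd l) a).
Proof.
move=> al; apply: ax_taut => h /=; rewrite peval_bigAnd.
by case E: (all _ _) => //=; move/allP: E => /(_ a al) ->.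
Qed.

Lemma modal_bigAnd (M : form -> form) t l :
  K4C (M Top) -> (forall a b, K4C (Imp (And (M a) (M b)) (M (And a b)))) ->
  (forall a, a \in l -> K4C (Imp t (M a))) -> K4C (Imp t (M (bigAnd l))).
Proof.
move=> MTop Mand; elim: l => [|a l IH] Hl.
  by apply: taut_mp1 MTop; prove_tautology.
change (K4C (Imp t (M (And a (bigAnd l))))).
have Ha := Hl a (mem_head _ _).
have Hrest : K4C (Imp t (M (bigAnd l))).
  by apply: IH => b bl; apply: Hl; rewrite inE bl orbT.
by apply: taut_mp3 Ha Hrest (Mand a (bigAnd l)); prove_tautology.
Qed.

Lemma box_mono a b : K4C (Imp a b) -> K4C (Imp (Box a) (Box b)).
Proof. by move=> Hab; apply: rule_mp (rule_nec_box Hab) (ax_K _ _). Qed.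

Lemma box_and a b : K4C (Imp (And (Box a) (Box b)) (Box (And a b))).
Proof.
have Hpair : K4C (Imp a (Imp b (And a b))) by apply: ax_taut; prove_tautology.
by apply: taut_mp2 (box_mono Hpair) (ax_K b (And a b)); prove_tautology.
Qed.

Lemma box_intro_and t a b :
  K4C (Imp t (Box a)) -> K4C (Imp t (Box b)) -> K4C (Imp t (Box (And a b))).
Proof. by move=> Ha Hb; apply: taut_mp3 Ha Hb (box_and a b); prove_tautology. Qed.

Lemma box_bigAnd t l :
  (forall a, a \in l -> K4C (Imp t (Box a))) -> K4C (Imp t (Box (bigAnd l))).
Proof. exact: modal_bigAnd (rule_nec_box Top_der) box_and. Qed.

Lemma next_and a b : K4C (Imp (And (Next a) (Next b)) (Next (And a b))).
Proof. by apply: taut_mp1 (ax_next_and a b); prove_tautology. Qed.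

Lemma next_mono a b : K4C (Imp a b) -> K4C (Imp (Next a) (Next b)).
Proof.
move=> Hab.
have Hn : K4C (Neg (Next (And a (Neg b)))).
  by apply: taut_mp2 (rule_nec_next Hab) (ax_next_neg (And a (Neg b))); prove_tautology.
by apply: taut_mp3 Hn (ax_next_and a (Neg b)) (ax_next_neg b); prove_tautology.
Qed.

(* Axiom C in rule form: if [a] proves [b] together with [Box b], then
   [Next a] proves [Box (Next b)]. *)
Lemma next_box_intro a b :
  K4C (Imp a (And b (Box b))) -> K4C (Imp (Next a) (Box (Next b))).
Proof.
move=> Hab; apply: imp_trans (next_mono Hab) _.
by apply: taut_mp2 (ax_next_and b (Box b)) (ax_C b); prove_tautology.
Qed.

Lemma next_bigAnd t l :
  (forall a, a \in l -> K4C (Imp t (Next a))) -> K4C (Imp t (Next (bigAnd l))).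
Proof. exact: modal_bigAnd (rule_nec_next Top_der) next_and. Qed.

Definition Con a := ~ K4C (Neg a).

Lemma con_weak a b : K4C (Imp a b) -> Con a -> Con b.
Proof. by move=> Hab Ca Nb; apply: Ca; apply: taut_mp2 Hab Nb; prove_tautology. Qed.

Lemma con_taut a b : tautology (Imp a b) -> Con a -> Con b.
Proof. by move=> tab; apply/con_weak/ax_taut. Qed.

Lemma con_contra a b : Con a -> K4C (Imp a b) -> K4C (Imp a (Neg b)) -> False.
Proof. by move=> Ca Hb Hnb; apply: Ca; apply: taut_mp2 Hb Hnb; prove_tautology. Qed.

Lemma con_neg a : ~ K4C a -> Con (Neg a).
Proof. by move=> Na NNa; apply: Na; apply: taut_mp1 NNa; prove_tautology. Qed.

Lemma con_or a b c : Con (And (Or a b) c) -> Con (And a c) \/ Con (And b c).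
Proof.
move=> C; apply: contrapT => /not_orP [/contrapT Nac /contrapT Nbc]; apply: C.
by apply: taut_mp2 Nac Nbc; prove_tautology.
Qed.

Lemma con_split a b : Con a -> Con (And a b) \/ Con (And a (Neg b)).
Proof.
move=> C; apply: contrapT => /not_orP [/contrapT Nab /contrapT Nanb]; apply: C.
by apply: taut_mp2 Nab Nanb; prove_tautology.
Qed.

Lemma con_box g a : Con (And (Box g) (Neg (Box a))) -> Con (And g (Neg a)).
Proof. by move=> C N; apply: C; apply: box_mono N. Qed.

Lemma con_next a b : Con (And (Next a) (Next b)) -> Con (And a b).
Proof.
move=> C N; apply: C.
apply: taut_mp3 (rule_nec_next N) (ax_next_neg (And a b)) (ax_next_and a b).
by prove_tautology.
Qed.
End Derivations.

(* Immediate subformulas of a formula that is not of the form [Next b]. *)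
Definition subs PV (a : form PV) : seq (form PV) :=
  match a with And b c => [:: b; c] | Neg b | Box b => [:: b] | _ => [::] end.

Definition subformula_closed PV (X : form PV -> Prop) : Prop :=
  forall k a b, b \in subs a -> X (iter k Next a) -> X (iter k Next b).

Fixpoint fsize PV (a : form PV) : nat :=
  match a with
  | Var _ => 1
  | And b c => (fsize b + fsize c).+1
  | Neg b | Box b | Next b => (fsize b).+1
  end.

Lemma fsize_iter_Next PV k (a : form PV) : k < fsize (iter k Next a).
Proof. by elim: k => [|k IH] //=; case: a. Qed.

Lemma fsize_le_sumn PV (L : seq (form PV)) a :
  a \in L -> fsize a <= sumn [seq fsize b | b <- L].
Proof.
elim: L => [//|b L IH]; rewrite inE => /orP [/eqP -> | /IH aL] /=.
  exact: leq_addr.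
exact: leq_trans aL (leq_addl _ _).
Qed.

Section CanonicalModel.
Variables (PV : Type) (p0 : PV) (L : seq (form PV)).
(* The hypotheses on [L] are those enjoyed by the closure of a formula. *)
Hypothesis L_unnext : forall a, Next a \in L -> a \in L.
Hypothesis L_closed : subformula_closed (fun a => a \in L).

Local Notation form := (form PV).
Local Notation bigAnd := (bigAnd p0).
Local Notation S := (seq_sub L).

(* A point is a pair of sets of formulas of [L]: a window [x.1] of formulas
   the point decides, and the set [x.2] of those it makes true. *)
Local Notation point := ({set S} * {set S})%type.
Implicit Types (a b c g : form) (D : {set S}) (x y z : point).

Definition occurs D a : Prop := exists2 w, w \in D & val w = a.
Definition holds x a : Prop := occurs x.2 a.

Definition shift D : {set S} := [set w | [exists u in D, val u == Next (val w)]].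
Definition step x : point := (shift x.1, shift x.2).

Definition literal x (w : S) : form := if w \in x.2 then val w else Neg (val w).
Definition charf x : form := bigAnd [seq literal x w | w <- enum x.1].

Definition is_point x : Prop :=
  [/\ x.2 \subset x.1, subformula_closed (occurs x.1) & Con (charf x)].

Lemma occurs_val D (w : S) : occurs D (val w) <-> w \in D.
Proof. by split=> [[u uD /val_inj <-] | wD] //; exists w. Qed.

Lemma occurs_sub D D' a : D \subset D' -> occurs D a -> occurs D' a.
Proof. by move=> /subsetP sDD' [w /sDD' wD' <-]; exists w. Qed.

Lemma occurs_shift D a : occurs (shift D) a <-> occurs D (Next a).
Proof.
split=> [[w] | [u uD Eu]].
  by rewrite inE => /existsP [u /andP [uD /eqP Eu]] <-; exists u.
have aL : a \in L by apply: L_unnext; rewrite -Eu (valP u).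
exists (Sub a aL : S); last by rewrite SubK.
by rewrite inE; apply/existsP; exists u; rewrite uD SubK Eu eqxx.
Qed.

Lemma occurs_iter_shift k D a : occurs (iter k shift D) a -> occurs D (iter k Next a).
Proof. by elim: k a => [//|k IH] a /= /occurs_shift /IH; rewrite -iterSr. Qed.

Lemma shift_closed D :
  subformula_closed (occurs D) -> subformula_closed (occurs (shift D)).
Proof.
move=> cD k a b ba /occurs_shift; rewrite -iterS => Ha.
by apply/occurs_shift; rewrite -iterS; apply: cD ba Ha.
Qed.

Lemma occurs_subs x a b : is_point x -> b \in subs a -> occurs x.1 a -> occurs x.1 b.
Proof. by case=> _ cx _ ba; apply: (cx 0 a). Qed.

Lemma charf_decides x a : occurs x.1 a ->
  (holds x a /\ K4C (Imp (charf x) a)) \/ (~ holds x a /\ K4C (Imp (charf x) (Neg a))).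
Proof.
case=> w wD <-.
have : K4C (Imp (charf x) (literal x w)).
  by apply: bigAnd_elim; apply: map_f; rewrite mem_enum.
rewrite /literal; case: ifP => wV Hlit; [left | right]; split=> //.
- exact/occurs_val.
- by move/occurs_val; rewrite wV.
Qed.

Lemma holds_iff_derivable x a : Con (charf x) -> occurs x.1 a ->
  holds x a <-> K4C (Imp (charf x) a).
Proof.
move=> Cx Da; case: (charf_decides Da) => [[Ha Hder] // | [nHa Hder]].
by split=> // Hpos; case: (con_contra Cx Hpos Hder).
Qed.

Lemma holds_and x a b : Con (charf x) -> occurs x.1 (And a b) ->
  occurs x.1 a -> occurs x.1 b -> holds x (And a b) <-> holds x a /\ holds x b.
Proof.
move=> Cx Dab Da Db; rewrite !holds_iff_derivable //.
split=> [Hab | [Ha Hb]]; last by apply: taut_mp2 Ha Hb; prove_tautology.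
by split; apply: taut_mp1 Hab; prove_tautology.
Qed.

Lemma holds_neg x a : Con (charf x) -> occurs x.1 (Neg a) -> occurs x.1 a ->
  holds x (Neg a) <-> ~ holds x a.
Proof.
move=> Cx Dna Da; rewrite holds_iff_derivable //.
case: (charf_decides Da) => [[Ha Hder] | [Ha Hder]]; last by [].
by split=> // Hneg; case: (con_contra Cx Hder Hneg).
Qed.

Lemma charf_step x : K4C (Imp (charf x) (Next (charf (step x)))).
Proof.
apply: next_bigAnd => b /mapP [w]; rewrite mem_enum => wD ->.
have DNw : occurs x.1 (Next (val w)) by apply/occurs_shift/occurs_val.
rewrite /literal /=; case: (charf_decides DNw) => [[Hw Hder] | [Hw Hder]].
  by have /occurs_val -> : occurs (shift x.2) (val w) by apply/occurs_shift.
have -> : (w \in shift x.2) = false by apply/negP => /occurs_val /occurs_shift.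
by apply: imp_trans Hder _; apply: taut_mp1 (ax_next_neg (val w)); prove_tautology.
Qed.

Lemma is_point_step x : is_point x -> is_point (step x).
Proof.
case=> sx cx Cx; split=> /=.
- apply/subsetP => w; rewrite !inE => /existsP [u /andP [uV Eu]].
  by apply/existsP; exists u; rewrite Eu (subsetP sx).
- exact: shift_closed.
- move=> N; apply: Cx.
  apply: taut_mp3 (charf_step x) (rule_nec_next N) (ax_next_neg (charf (step x))).
  by prove_tautology.
Qed.

Definition box_sees x y : Prop :=
  x.1 = y.1 /\ forall a, holds x (Box a) -> holds y a /\ holds y (Box a).

(* The accessibility relation: the least relation that relates □-successors
   whose images under [step] are equal or again related.  It is transitive,
   and weakly monotone for [step] by construction. *)
Inductive canon_rel : point -> point -> Prop :=
| rel_step_eq x y : is_point x -> is_point y -> box_sees x y ->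
    step x = step y -> canon_rel x y
| rel_step_rel x y : is_point x -> is_point y -> box_sees x y ->
    canon_rel (step x) (step y) -> canon_rel x y.

Lemma canon_relE x y : canon_rel x y <-> [/\ is_point x, is_point y, box_sees x y
  & step x = step y \/ canon_rel (step x) (step y)].
Proof.
split; first by case=> *; split=> //; [left | right].
by case=> px py bxy [] Hstep; [apply: rel_step_eq | apply: rel_step_rel].
Qed.

Lemma box_sees_trans x y z : box_sees x y -> box_sees y z -> box_sees x z.
Proof.
move=> [exy Hxy] [eyz Hyz]; split; first by rewrite exy.
by move=> a /Hxy [_ /Hyz].
Qed.

Lemma canon_rel_trans x y z : canon_rel x y -> canon_rel y z -> canon_rel x z.
Proof.
move=> Rxy; elim: Rxy z => {x y} [x y px py bxy exy | x y px py bxy Rstep IH] z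
  /canon_relE [_ pz byz Hyz]; apply/canon_relE; split=> //.
- exact: box_sees_trans bxy byz.
- by rewrite exy.
- exact: box_sees_trans bxy byz.
- by right; case: Hyz => [<- | /IH].
Qed.

Lemma canon_rel_monotone x y :
  canon_rel x y -> step x = step y \/ canon_rel (step x) (step y).
Proof. by case/canon_relE. Qed.

(* The canonical frame lives on all pairs of sets; pairs that are not points
   are isolated under [canon_rel]. *)
Definition canon_frame : fin_dyn_frame :=
  @FinDynFrame point canon_rel (set0, set0) step canon_rel_monotone.

Lemma canon_frame_K4 : is_K4 canon_frame.
Proof. exact: canon_rel_trans. Qed.

(* Windows die out: ○^k a has size above k, so a window shifted more often
   than the total size of [L] is empty. *)
Definition size_bound : nat := sumn [seq fsize b | b <- L].

Lemma shift_iter_empty D : iter size_bound.+1 shift D = set0.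
Proof.
apply/setP => w; rewrite [in RHS]inE; apply/negbTE/negP.
move=> /occurs_val /occurs_iter_shift [u _ Eu].
have := fsize_le_sumn (valP u); rewrite Eu -/size_bound.
have := fsize_iter_Next size_bound.+1 (val w).
by move=> /leq_trans lt_bound /lt_bound; rewrite ltnNge leqnSn.
Qed.

Lemma lindenbaum_seq D (s : seq S) c : uniq s -> Con c ->
  exists2 V : {set S}, {subset V <= s} &
    Con (And c (bigAnd [seq literal (D, V) w | w <- s])).
Proof.
elim: s c => [|w s IH] c /=.
  move=> _ Cc; exists set0 => [u|]; first by rewrite inE.
  by apply: con_taut Cc; prove_tautology.
case/andP => ws us Cc.
have lits_eq (V V' : {set S}) : {in s, V =i V'} ->
    [seq literal (D, V) u | u <- s] = [seq literal (D, V') u | u <- s].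
  by move=> eVV'; apply/eq_in_map => u us'; rewrite /literal /= eVV'.
have ws' u : u \in s -> (u == w) = false.
  by move=> us'; apply/negbTE; apply: contraNneq ws => <-.
case: (con_split (val w) Cc) => Cw; have [V sV CV] := IH _ us Cw.
- exists (w |: V) => [u|].
    by rewrite !inE => /orP [-> | /sV ->] //; rewrite orbT.
  rewrite (lits_eq (w |: V) V) => [|u us']; last by rewrite !inE ws'.
  have -> : literal (D, w |: V) w = val w by rewrite /literal /= setU11.
  by apply: con_taut CV; prove_tautology.
- exists V => [u /sV|]; first by rewrite inE orbC => ->.
  have -> : literal (D, V) w = Neg (val w).
    by rewrite /literal /=; case: ifP => // /sV; rewrite (negbTE ws).
  by apply: con_taut CV; prove_tautology.
Qed.

Lemma lindenbaum D c :
  Con c -> exists2 V : {set S}, V \subset D & Con (And c (charf (D, V))).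
Proof.
move=> Cc; have [V sV CV] := lindenbaum_seq D (enum_uniq (mem D)) Cc.
by exists V => //; apply/subsetP => u /sV; rewrite mem_enum.
Qed.

Lemma charf_holds x a : x.2 \subset x.1 -> holds x a -> K4C (Imp (charf x) a).
Proof.
move=> sx [w wV <-].
have -> : val w = literal x w by rewrite /literal wV.
by apply: bigAnd_elim; apply: map_f; rewrite mem_enum (subsetP sx).
Qed.

Definition unbox a : option form := if a is Box b then Some b else None.
Definition boxed x : seq form := pmap unbox [seq val w | w <- enum x.2].
Definition box_content x : form := bigAnd [seq And b (Box b) | b <- boxed x].

Lemma boxedP x b : b \in boxed x <-> holds x (Box b).
Proof.
rewrite mem_pmap; split=> [/mapP [_ /mapP [w wV ->] Eb] | [w wV Ew]].
  by case Ew: (val w) Eb => [||| b' |] //= [->]; exists w; rewrite // -mem_enum.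
by apply/mapP; exists (Box b) => //; apply/mapP; exists w; rewrite ?mem_enum.
Qed.

Lemma box_content_elim x a :
  holds x (Box a) -> K4C (Imp (box_content x) (And a (Box a))).
Proof. by move/boxedP => ab; apply: bigAnd_elim; apply: map_f. Qed.

Lemma charf_box_content x :
  x.2 \subset x.1 -> K4C (Imp (charf x) (Box (box_content x))).
Proof.
move=> sx; apply: box_bigAnd => _ /mapP [b /boxedP Hb ->].
have Hbox := charf_holds sx Hb.
exact: box_intro_and Hbox (imp_trans Hbox (ax_4 b)).
Qed.

(* [reach n x] describes the points of the window of [x] that are [x] itself
   or related to [x] (see [reachP]); by axiom C, used along the trajectory of
   [x], every □-successor of [x] satisfies it. *)
Fixpoint reach n x : form :=
  if n is m.+1 then Or (charf x) (And (box_content x) (Next (reach m (step x))))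
  else Top p0.

Lemma charf_box_next_reach n x :
  is_point x -> K4C (Imp (charf x) (Box (Next (reach n (step x))))).
Proof.
elim: n x => [|n IH] x px.
  by apply: taut_mp1 (rule_nec_box (rule_nec_next (Top_der p0))); prove_tautology.
set y := step x; have py := is_point_step px.
set G := And (box_content y) (Next (reach n (step y))).
have HG : K4C (Imp (charf y) (Box G)).
  by apply: box_intro_and (charf_box_content _) (IH y py); case: py.
have Hreach : K4C (Imp (charf y) (And (Or (charf y) G) (Box (Or (charf y) G)))).
  have HGor : K4C (Imp G (Or (charf y) G)) by apply: ax_taut; prove_tautology.
  by apply: taut_mp2 HG (box_mono HGor); prove_tautology.
exact: imp_trans (charf_step x) (next_box_intro Hreach).
Qed.

Lemma charf_box_successor n x : is_point x ->
  K4C (Imp (charf x) (Box (And (box_content x) (Next (reach n (step x)))))).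
Proof.
move=> px; apply: box_intro_and (charf_box_next_reach n px).
by apply: charf_box_content; case: px.
Qed.

Lemma holds_agree x z a : x.2 \subset x.1 -> Con (And (charf x) (charf z)) ->
  occurs z.1 a -> holds x a -> holds z a.
Proof.
move=> sx Cxz Da Hxa; case: (charf_decides Da) => [[] // | [_ Hz]]; exfalso.
have Hx := charf_holds sx Hxa.
by apply: (con_contra Cxz (b := a)); [apply: taut_mp1 Hx | apply: taut_mp1 Hz];
  prove_tautology.
Qed.

Lemma same_window_eq x z : is_point x -> is_point z -> x.1 = z.1 ->
  Con (And (charf x) (charf z)) -> x = z.
Proof.
case=> sx _ _ [sz _ _] e1 Cxz.
have Czx : Con (And (charf z) (charf x)) by apply: con_taut Cxz; prove_tautology.
rewrite [x]surjective_pairing [z]surjective_pairing -e1; congr pair.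
apply/setP => w; apply/idP/idP => wV; apply/occurs_val.
- apply: (holds_agree sx Cxz); last exact/occurs_val.
  by rewrite -e1; apply/occurs_val/(subsetP sx).
- apply: (holds_agree sz Czx); last exact/occurs_val.
  by rewrite e1; apply/occurs_val/(subsetP sz).
Qed.

Lemma empty_window_eq x z :
  is_point x -> is_point z -> x.1 = set0 -> z.1 = set0 -> x = z.
Proof.
case=> sx _ _ [sz _ _] ex ez.
move: sx sz; rewrite ex ez !subset0 => /eqP ex2 /eqP ez2.
by rewrite [x]surjective_pairing [z]surjective_pairing ex ez ex2 ez2.
Qed.

Lemma box_sees_con x z g : x.2 \subset x.1 -> is_point z -> x.1 = z.1 ->
  Con (And (And (box_content x) g) (charf z)) -> box_sees x z.
Proof.
move=> sx pz e1 C; split=> // a Hxa.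
have DBa : occurs z.1 (Box a) by rewrite -e1; apply: occurs_sub sx Hxa.
have Da : occurs z.1 a by apply: occurs_subs pz _ DBa; rewrite inE.
have forced b : occurs z.1 b -> K4C (Imp (box_content x) b) -> holds z b.
  move=> Db Hb; case: (charf_decides Db) => [[] // | [_ Hnb]]; exfalso.
  by apply: C; apply: taut_mp2 Hb Hnb; prove_tautology.
have Hcontent := box_content_elim Hxa.
by split; apply: forced => //; apply: imp_trans Hcontent _; apply: ax_taut;
  prove_tautology.
Qed.

Definition reach_spec n : Prop := forall x z,
  is_point x -> is_point z -> x.1 = z.1 -> iter n shift x.1 = set0 ->
  Con (And (reach n x) (charf z)) -> z = x \/ canon_rel x z.

Lemma successor_rel n x z : reach_spec n -> is_point x -> is_point z ->
  x.1 = z.1 -> iter n.+1 shift x.1 = set0 ->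
  Con (And (And (box_content x) (Next (reach n (step x)))) (charf z)) ->
  canon_rel x z.
Proof.
move=> IH px pz e1 en C; apply/canon_relE; split=> //.
  by apply: box_sees_con C => //; case: px.
have Cstep : Con (And (reach n (step x)) (charf (step z))).
  apply: con_next; apply: con_weak C.
  by apply: taut_mp1 (charf_step z); prove_tautology.
have e1' : (step x).1 = (step z).1 by rewrite /= e1.
have en' : iter n shift (step x).1 = set0 by rewrite /= -iterSr.
by case: (IH _ _ (is_point_step px) (is_point_step pz) e1' en' Cstep) => [<-|];
  [left | right].
Qed.

Lemma reachP n : reach_spec n.
Proof.
elim: n => [|n IH] x z px pz e1 en C.
  move: en => /= en; left.
  by apply: empty_window_eq pz px (etrans (esym e1) en) en.
case: (con_or C) => [Cxz | Csucc]; last first.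
  by right; apply: successor_rel IH px pz e1 en Csucc.
left; apply: same_window_eq pz px (esym e1) _.
by apply: con_taut Cxz; prove_tautology.
Qed.

Lemma box_witness x a : is_point x -> occurs x.1 (Box a) -> ~ holds x (Box a) ->
  exists2 z, canon_rel x z & [/\ is_point z, occurs z.1 a & ~ holds z a].
Proof.
move=> px DBa nBa; have [sx cx Cx] := px.
have Hneg : K4C (Imp (charf x) (Neg (Box a))).
  by case: (charf_decides DBa) => [[]|[]].
(* [charf x] proves both □(content ∧ ○reach) and ¬□a, so that conjunction
   with ¬a is consistent, and extends to a point on the window of [x]. *)
have CG : Con (And (And (box_content x) (Next (reach size_bound (step x))))
                   (Neg a)).
  apply: con_box; apply: con_weak Cx.
  by apply: taut_mp2 (charf_box_successor size_bound px) Hneg; prove_tautology.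
have [V sV CV] := lindenbaum x.1 CG.
have pz : is_point (x.1, V) by split=> //; apply: con_taut CV; prove_tautology.
have Da : occurs x.1 a by apply: occurs_subs px _ DBa; rewrite inE.
exists (x.1, V); last split=> // Ha.
  apply: successor_rel (@reachP size_bound) px pz _ (shift_iter_empty _) _ => //.
  by apply: con_taut CV; prove_tautology.
apply: (con_contra CV (b := a)); last by apply: ax_taut; prove_tautology.
apply: imp_trans _ (charf_holds (x := (_, V)) sV Ha).
by apply: ax_taut; prove_tautology.
Qed.

Definition canon_val (p : PV) (x : canon_frame) : Prop := holds x (Var p).

Lemma truth a x : is_point x -> occurs x.1 a -> sat canon_val x a <-> holds x a.
Proof.
elim: a x => [p | a IHa b IHb | a IHa | a IHa | a IHa] x px Dx //=;
  have [_ _ Cx] := px.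
- have Da : occurs x.1 a by apply: occurs_subs px _ Dx; rewrite inE eqxx.
  have Db : occurs x.1 b by apply: occurs_subs px _ Dx; rewrite !inE eqxx orbT.
  by rewrite holds_and // IHa // IHb.
- have Da : occurs x.1 a by apply: occurs_subs px _ Dx; rewrite inE.
  by rewrite holds_neg // IHa.
- split=> [Hsat | Hbox y /canon_relE [_ py [e1 Hsees] _]].
    apply: contrapT => nBa; have [z Rxz [pz Dz nHz]] := box_witness px Dx nBa.
    by apply/nHz/(IHa z pz Dz)/Hsat.
  have Da : occurs y.1 a by rewrite -e1; apply: occurs_subs px _ Dx; rewrite inE.
  by apply/(IHa y py Da); case: (Hsees a Hbox).
- rewrite IHa; [exact: occurs_shift | exact: is_point_step | exact/occurs_shift].
Qed.

Lemma occurs_setT a : occurs setT a <-> a \in L.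
Proof.
split=> [[w _ <-] | aL]; first exact: valP.
by exists (Sub a aL : S); rewrite ?inE ?SubK.
Qed.

Lemma refuting_point a : a \in L -> ~ K4C a ->
  exists2 x, is_point x & occurs x.1 a /\ ~ holds x a.
Proof.
move=> aL Na; have [V sV CV] := lindenbaum setT (con_neg Na).
have cT : subformula_closed (occurs setT).
  by move=> k b c cb /occurs_setT Hb; apply/occurs_setT; apply: L_closed cb Hb.
exists (setT, V); first by split=> //; apply: con_taut CV; prove_tautology.
split=> [|Ha]; first exact/occurs_setT.
apply: (con_contra CV (b := a)); last by apply: ax_taut; prove_tautology.
apply: imp_trans _ (charf_holds (x := (_, V)) sV Ha).
by apply: ax_taut; prove_tautology.
Qed.

Lemma canon_refutes a : a \in L -> ~ K4C a -> ~ valid_on canon_frame a.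
Proof.
move=> aL Na Hvalid; have [x px [Dx nHa]] := refuting_point aL Na.
by apply/nHa/(truth px Dx)/Hvalid.
Qed.
End CanonicalModel.

Fixpoint closure PV (a : form PV) : seq (form PV) :=
  match a with
  | Var _ => [:: a]
  | And b c => a :: closure b ++ closure c
  | Neg b | Box b => a :: closure b
  | Next b => a :: closure b ++ map Next (closure b)
  end.

Lemma closure_self PV (a : form PV) : a \in closure a.
Proof. by case: a => *; rewrite inE eqxx. Qed.

Lemma subs_closure PV (a b : form PV) : b \in subs a -> b \in closure a.
Proof.
case: a => [p | c d | c | c | c]; cbn [subs closure];
  rewrite ?in_nil // !in_cons ?in_nil ?orbF.
  by case/orP => /eqP ->; rewrite mem_cat closure_self ?orbT.
all: by move/eqP ->; rewrite closure_self orbT.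
Qed.

Lemma closure_unnext PV (phi : form PV) a :
  Next a \in closure phi -> a \in closure phi.
Proof.
elim: phi => [p | c IHc d IHd | c IHc | c IHc | c IHc]; cbn [closure];
  rewrite !in_cons ?mem_cat.
- by case/orP => [/eqP | ] //; rewrite in_nil.
- by case/orP => [/eqP // | /orP [/IHc | /IHd] ->]; rewrite ?orbT.
- by case/orP => [/eqP // | /IHc ->]; rewrite orbT.
- by case/orP => [/eqP // | /IHc ->]; rewrite orbT.
- case/orP => [/eqP [->] | /orP [/IHc -> | /mapP [y yc [->]]]];
    by rewrite ?closure_self ?yc ?orbT.
Qed.

Lemma closure_head PV k (a b : form PV) :
  b \in subs a -> iter k Next b \in closure (iter k Next a).
Proof.
move=> ba; elim: k => [|k IH]; first exact: subs_closure.
by cbn [iter closure]; rewrite in_cons mem_cat (map_f Next IH) !orbT.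
Qed.

Lemma closure_closed PV (phi : form PV) :
  subformula_closed (fun a => a \in closure phi).
Proof.
move=> k a b ba; elim: phi k => [p | c IHc d IHd | c IHc | c IHc | c IHc] k;
  cbn [closure]; rewrite in_cons => /orP [/eqP Ehead | ];
  try by have := closure_head k ba; rewrite Ehead.
- by rewrite in_nil.
- by rewrite mem_cat => /orP [/IHc | /IHd] Hb; rewrite in_cons mem_cat Hb ?orbT.
- by move=> /IHc Hb; rewrite in_cons Hb orbT.
- by move=> /IHc Hb; rewrite in_cons Hb orbT.
- rewrite mem_cat => /orP [/IHc Hb | /mapP [y yc Ey]].
    by rewrite in_cons mem_cat Hb orbT.
  case: k Ey => [|k] Ey; first by move: ba; rewrite -[a]/(iter 0 Next a) Ey.
  case: Ey => Ey.
  by rewrite in_cons mem_cat (map_f Next (IHc k _)) ?orbT // Ey.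
Qed.

Section Soundness.
Variables (PV : Type) (F : fin_dyn_frame) (nu : PV -> F -> Prop).
Hypothesis F_K4 : is_K4 F.

Lemma peval_sat (w : F) (a : form PV) :
  peval (fun b => `[< sat nu w b >]) a = `[< sat nu w a >].
Proof.
elim: a => //= [a IHa b IHb | a IHa]; first by rewrite IHa IHb asbool_and.
by rewrite IHa asbool_neg.
Qed.

Lemma soundness (a : form PV) : K4C a -> forall w : F, sat nu w a.
Proof.
elim=> {a} /=.
- by move=> a Ha w; apply/asboolP; rewrite -peval_sat; apply: Ha.
- move=> a b w [HK HnK]; apply: HnK => -[Ha Hnb]; apply: Hnb => v wv.
  by apply: contrapT => nb; apply: (HK v wv); split; [apply: Ha | ].
- move=> a w [Ha Hn4]; apply: Hn4 => v wv u vu.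
  exact: Ha u (F_K4 wv vu).
- by move=> a w; tauto.
- by move=> a b w; tauto.
- move=> a w [[Ha Hba] HnC]; apply: HnC => v wv.
  by case: (dyn_weakly_monotone wv) => [<- | /Hba].
- move=> a b _ IHa _ IHab w; apply: contrapT => nb.
  by apply: (IHab w); split; [apply: IHa | ].
- by move=> a _ IH w v _; apply: IH.
- by move=> a _ IH w; apply: IH.
Qed.
End Soundness.

Theorem mainTheorem4 (PV : Type) (p0 : PV) (phi : form PV) :
  K4C phi <-> (forall F : fin_dyn_frame, is_K4 F -> valid_on F phi).
Proof.
split=> [Hphi F F_K4 nu w | Hvalid]; first exact: (soundness nu F_K4 Hphi w).
apply: contrapT => Nphi.
apply: (canon_refutes (p0 := p0) (@closure_unnext _ phi) (@closure_closed _ phi)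
  (closure_self phi) Nphi).
exact/Hvalid/canon_frame_K4.
Qed.
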